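(* Let $\alpha\in(1/2,1/\sqrt2)$ and $B\coloneqq\overline{R_\varepsilon\setminus\big(R_0\cap[H_+^\delta\cup H_-^\delta]\big)}$. For any two distinct finite words $w\ne w'$ in $\{1,2\}^*$ and any $t\in\mathbb{R}$, $F_w^t(B)\cap F_{w'}^t(B)=\emptyset$.
   Context: Constants: $\varepsilon=\frac1{4\alpha}-\frac1{2\sqrt2}$, $\delta=\frac14-\frac{\alpha}{2\sqrt2}$. Let $\eta\in C_c^\infty(\mathbb{R})$ be nonnegative with support in $(0,1)$ and $\int_0^1\eta=\delta$. $\mathcal{R}(x_1,x_2)=(-x_2,x_1)$. For $t\in\mathbb{R}$, $F_1^t(x)=\big(1-\int_0^t\eta,0\big)+\alpha\mathcal{R}x$, $F_2^t(x)=\big(-1+\int_0^t\eta,0\big)+\alpha\mathcal{R}x$, and for $w\in\{1,2\}^k$, $F_w^t=F_{w_1}^t\circ\cdots\circ F_{w_k}^t$, $F_\emptyset^t=\mathrm{Id}$; $\{1,2\}^*=\bigcup_{k\ge0}\{1,2\}^k$. $R_\xi=[-2-\xi,2+\xi]\times[-\sqrt2-\xi,\sqrt2+\xi]$; $H_\pm^\xi=\{x:\pm x_1\ge\xi\}$. *)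

From Stdlib Require Import Reals Lra List ClassicalEpsilon.
Open Scope R_scope.

Definition pt := (R * R)%type.

Definition eps_c (alpha : R) : R := / (4 * alpha) - / (2 * sqrt 2).
Definition delta_c (alpha : R) : R := / 4 - alpha / (2 * sqrt 2).

Definition smooth (f : R -> R) : Prop :=
  exists D : nat -> R -> R,
    (forall x, D 0%nat x = f x) /\
    (forall n x, derivable_pt_lim (D n) x (D (S n) x)).

Definition supp_in_01 (f : R -> R) : Prop :=
  exists a b, 0 < a /\ a <= b /\ b < 1 /\
    forall x, (x < a \/ b < x) -> f x = 0.

(* Riemann integral int_a^b f (Stdlib convention, so int_a^b = - int_b^a);
   the value does not depend on the integrability proof (RiemannInt_P5). *)
Definition Rint (f : R -> R) (a b : R) : R :=
  epsilon (inhabits 0)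
    (fun r => exists pr : Riemann_integrable f a b, RiemannInt pr = r).

Definition rot (x : pt) : pt := (- snd x, fst x).

Inductive letter := L1 | L2.

Definition Fmap (alpha : R) (eta : R -> R) (t : R) (i : letter) (x : pt) : pt :=
  let s := Rint eta 0 t in
  match i with
  | L1 => (1 - s + alpha * fst (rot x), alpha * snd (rot x))
  | L2 => (-1 + s + alpha * fst (rot x), alpha * snd (rot x))
  end.

Definition Fword (alpha : R) (eta : R -> R) (t : R) (w : list letter) (x : pt) : pt :=
  fold_right (fun i y => Fmap alpha eta t i y) x w.

Definition Rect (xi : R) (x : pt) : Prop :=
  - 2 - xi <= fst x <= 2 + xi /\ - sqrt 2 - xi <= snd x <= sqrt 2 + xi.
Definition Hplus (xi : R) (x : pt) : Prop := fst x >= xi.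
Definition Hminus (xi : R) (x : pt) : Prop := - fst x >= xi.

Definition closure (S : pt -> Prop) (x : pt) : Prop :=
  forall r, 0 < r -> exists y, S y /\
    (fst x - fst y)^2 + (snd x - snd y)^2 < r^2.

Definition Bset (alpha : R) : pt -> Prop :=
  closure (fun x => Rect (eps_c alpha) x /\
    ~ (Rect 0 x /\ (Hplus (delta_c alpha) x \/ Hminus (delta_c alpha) x))).

Definition image (f : pt -> pt) (S : pt -> Prop) (y : pt) : Prop :=
  exists x, S x /\ f x = y.

From Stdlib Require Import Reals List.
From Stdlib Require Import Lra Psatz ClassicalEpsilon FunctionalExtensionality.
Open Scope R_scope.

(* Write s = int_0^t eta.  Since eta >= 0 is supported in (0,1)
   with total mass delta, we have 0 <= s <= delta for every t.  The maps are
   F_i(x) = (side_i (1 - s) - alpha x2, alpha x1) with side_1 = 1, side_2 = -1,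
   and the numerical identities alpha (sqrt 2 + eps) = 1 - 3 delta and
   alpha (2 + eps) < sqrt 2 show that F_i maps the rectangle R_eps into the
   "core" strip { 2 delta <= side_i x1 <= 2 - 3 delta, |x2| <= alpha (2+eps) }.
   A core point lies in R_eps, lies with a positive margin inside
   R_0 cap H_(+-)^delta (hence outside B), and determines the letter i by the
   sign of x1.  Since B is contained in R_eps, every F_w maps B into R_eps, and
   disjointness follows by induction on the words: a nonempty word sends B
   outside B, different first letters give different sides, and equal first
   letters are cancelled by injectivity of F_i. *)

Lemma smooth_continuous (f : R -> R) : smooth f -> forall x, continuity_pt f x.
Proof.
  intros [D [HD0 HDS]] x.
  assert (E : D 0%nat = f) by (apply functional_extensionality; auto).
  rewrite <- E. apply derivable_continuous_pt. exists (D 1%nat x). apply HDS.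
Qed.

Lemma smooth_integrable (f : R -> R) : smooth f -> forall a b, Riemann_integrable f a b.
Proof.
  intros Hs a b.
  assert (Hc : forall x, continuity_pt f x) by now apply smooth_continuous.
  destruct (Rle_dec a b) as [h|h].
  - apply continuity_implies_RiemannInt; auto.
  - apply RiemannInt_P1, continuity_implies_RiemannInt; auto; lra.
Qed.

Lemma Rint_RiemannInt (f : R -> R) a b (pr : Riemann_integrable f a b) :
  Rint f a b = RiemannInt pr.
Proof.
  unfold Rint.
  destruct (epsilon_spec (inhabits 0)
     (fun r => exists pr : Riemann_integrable f a b, RiemannInt pr = r))
     as [pr' Hp].
  { exists (RiemannInt pr), pr. reflexivity. }
  rewrite <- Hp. apply RiemannInt_P5.
Qed.

Lemma RiemannInt_vanishing (f : R -> R) a b (pr : Riemann_integrable f a b) :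
  a <= b -> (forall x, a < x < b -> f x = 0) -> RiemannInt pr = 0.
Proof.
  intros hab Hz.
  rewrite (RiemannInt_P18 pr (RiemannInt_P14 a b 0) hab).
  - rewrite RiemannInt_P15. ring.
  - intros x hx. unfold fct_cte. auto.
Qed.

Lemma RiemannInt_nonneg (f : R -> R) a b (pr : Riemann_integrable f a b) :
  a <= b -> (forall x, 0 <= f x) -> 0 <= RiemannInt pr.
Proof.
  intros hab Hn.
  assert (h := RiemannInt_P19 (RiemannInt_P14 a b 0) pr hab).
  rewrite RiemannInt_P15 in h. unfold fct_cte in h.
  assert (0 * (b - a) <= RiemannInt pr) by (apply h; intros; auto). lra.
Qed.

Lemma Rint_range (f : R -> R) (m : R) :
  smooth f -> (forall x, 0 <= f x) -> supp_in_01 f -> Rint f 0 1 = m ->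
  forall t, 0 <= Rint f 0 t <= m.
Proof.
  intros Hs Hn [a [b [ha [hab [hb Hz]]]]] Hm t.
  set (I := smooth_integrable f Hs).
  rewrite (Rint_RiemannInt _ _ _ (I 0 1)) in Hm.
  rewrite (Rint_RiemannInt _ _ _ (I 0 t)).
  assert (Hm0 : 0 <= RiemannInt (I 0 1)) by (apply RiemannInt_nonneg; auto; lra).
  destruct (Rle_dec t 0) as [h0|h0]; [|destruct (Rle_dec t 1) as [h1|h1]].
  - rewrite (RiemannInt_P8 (I 0 t) (I t 0)),
      (RiemannInt_vanishing _ _ _ _ h0) by (intros x hx; apply Hz; lra).
    lra.
  - rewrite <- Hm, <- (RiemannInt_P26 (I 0 t) (I t 1)).
    assert (0 <= RiemannInt (I 0 t)) by (apply RiemannInt_nonneg; auto; lra).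
    assert (0 <= RiemannInt (I t 1)) by (apply RiemannInt_nonneg; auto).
    lra.
  - rewrite <- (RiemannInt_P26 (I 0 1) (I 1 t)),
      (RiemannInt_vanishing _ _ _ _ (Rlt_le _ _ (Rnot_le_lt _ _ h1)))
      by (intros x hx; apply Hz; lra).
    lra.
Qed.

(* For 1/2 < alpha < 1/sqrt 2 both eps and delta are positive, the rotated,
   scaled half-height of R_eps is alpha (sqrt 2 + eps) = 1 - 3 delta, and the
   scaled half-width alpha (2 + eps) is still below sqrt 2. *)
Lemma alpha_constants alpha : / 2 < alpha < / sqrt 2 ->
  0 < alpha /\ 0 < delta_c alpha /\ 0 < eps_c alpha /\
  alpha * (sqrt 2 + eps_c alpha) = 1 - 3 * delta_c alpha /\
  alpha * (2 + eps_c alpha) < sqrt 2.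
Proof.
  intros [h1 h2].
  assert (hq : sqrt 2 * sqrt 2 = 2) by (apply sqrt_sqrt; lra).
  set (q := sqrt 2) in *.
  assert (hq0 : 0 < q) by (unfold q; apply sqrt_lt_R0; lra).
  assert (hq1 : 1 < q) by nra.
  assert (hqi : / q = q / 2) by (field_simplify_eq; lra).
  assert (hq2 : / (2 * q) = q / 4) by (field_simplify_eq; lra).
  rewrite hqi in h2.
  assert (ha : 0 < alpha) by lra.
  assert (haq : alpha * q < 1) by nra.
  assert (hai : q < / alpha).
  { apply Rmult_lt_reg_l with alpha; auto. rewrite Rinv_r; lra. }
  assert (h4 : / (4 * alpha) = / 4 * / alpha) by (field; lra).
  assert (hb : alpha * / alpha = 1) by (field; lra).
  assert (hh : 0 < (q - /4) * (1 - alpha * q)) by (apply Rmult_lt_0_compat; lra).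
  unfold eps_c, delta_c. fold q. rewrite hq2, h4. unfold Rdiv.
  repeat split; nra.
Qed.

Lemma closure_near (S : pt -> Prop) x r : closure S x -> 0 < r ->
  exists y, S y /\ Rabs (fst x - fst y) < r /\ Rabs (snd x - snd y) < r.
Proof.
  intros Hc hr. destruct (Hc r hr) as [y [hy hd]].
  exists y. split; [exact hy|].
  revert hd. generalize (fst x - fst y) (snd x - snd y). intros a b hd.
  split; apply Rabs_def1; nra.
Qed.

Lemma closure_Rect (S : pt -> Prop) e x :
  (forall y, S y -> Rect e y) -> closure S x -> Rect e x.
Proof.
  intros HS Hc.
  assert (Hnear : forall r, 0 < r ->
    exists y, Rect e y /\ Rabs (fst x - fst y) < r /\ Rabs (snd x - snd y) < r).
  { intros r hr. destruct (closure_near S x r Hc hr) as [y [hy hxy]].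
    exists y. auto. }
  unfold Rect.
  split; split; apply Rle_plus_epsilon; intros r hr;
    destruct (Hnear r hr) as [y [[[? ?] [? ?]] [hx1 hx2]]];
    apply Rabs_def2 in hx1; apply Rabs_def2 in hx2; lra.
Qed.

Lemma Bset_Rect alpha x : Bset alpha x -> Rect (eps_c alpha) x.
Proof. apply closure_Rect. intros y [hy _]. exact hy. Qed.

Lemma interior_not_Bset alpha r x : 0 <= delta_c alpha -> 0 < r ->
  (delta_c alpha + r <= fst x <= 2 - r \/ delta_c alpha + r <= - fst x <= 2 - r) ->
  - sqrt 2 + r <= snd x <= sqrt 2 - r ->
  ~ Bset alpha x.
Proof.
  intros hd hr h1 h2 Hc.
  destruct (closure_near _ x r Hc hr) as [y [[_ hy] [hx1 hx2]]].
  apply Rabs_def2 in hx1. apply Rabs_def2 in hx2.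
  apply hy. unfold Rect, Hplus, Hminus.
  destruct h1; (split; [repeat split; lra|]); [left|right]; lra.
Qed.

Definition side (i : letter) : R := match i with L1 => 1 | L2 => -1 end.

Lemma Fmap_coords alpha eta t i x :
  Fmap alpha eta t i x =
  (side i * (1 - Rint eta 0 t) - alpha * snd x, alpha * fst x).
Proof. destruct i; unfold Fmap, rot; simpl; f_equal; ring. Qed.

(* Each F_i is injective, being a rotation-homothety followed by a shift. *)
Lemma Fmap_inj alpha eta t i x x' : 0 < alpha ->
  Fmap alpha eta t i x = Fmap alpha eta t i x' -> x = x'.
Proof.
  intros ha h. rewrite !Fmap_coords in h. injection h as h1 h2.
  destruct x as [x1 x2], x' as [y1 y2]; simpl in *.
  f_equal; apply Rmult_eq_reg_l with alpha; lra.
Qed.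

Section CoreStrip.

Variable alpha : R.
Hypothesis Halpha : / 2 < alpha < / sqrt 2.

(* The strip of side i into which F_i maps R_eps. *)
Definition core (i : letter) (z : pt) : Prop :=
  2 * delta_c alpha <= side i * fst z <= 2 - 3 * delta_c alpha /\
  - alpha * (2 + eps_c alpha) <= snd z <= alpha * (2 + eps_c alpha).

Lemma Fmap_core eta t i x :
  0 <= Rint eta 0 t <= delta_c alpha -> Rect (eps_c alpha) x ->
  core i (Fmap alpha eta t i x).
Proof.
  intros Hs [[a1 a2] [b1 b2]].
  destruct (alpha_constants alpha Halpha) as [ha [hd [he [hy hx]]]].
  assert (c1 : alpha * (sqrt 2 + eps_c alpha - snd x) >= 0)
    by (apply Rle_ge, Rmult_le_pos; lra).
  assert (c2 : alpha * (sqrt 2 + eps_c alpha + snd x) >= 0)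
    by (apply Rle_ge, Rmult_le_pos; lra).
  assert (c3 : alpha * (2 + eps_c alpha - fst x) >= 0)
    by (apply Rle_ge, Rmult_le_pos; lra).
  assert (c4 : alpha * (2 + eps_c alpha + fst x) >= 0)
    by (apply Rle_ge, Rmult_le_pos; lra).
  rewrite Fmap_coords. unfold core; simpl.
  destruct i; simpl; lra.
Qed.

Lemma core_Rect i z : core i z -> Rect (eps_c alpha) z.
Proof.
  destruct (alpha_constants alpha Halpha) as [ha [hd [he [hy hx]]]].
  intros [h1 h2]. unfold Rect. destruct i; simpl in h1; lra.
Qed.

Lemma core_not_Bset i z : core i z -> ~ Bset alpha z.
Proof.
  destruct (alpha_constants alpha Halpha) as [ha [hd [he [hy hx]]]].
  intros [h1 h2].
  set (r := Rmin (delta_c alpha) (sqrt 2 - alpha * (2 + eps_c alpha))).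
  assert (hr : 0 < r) by (apply Rmin_glb_lt; lra).
  assert (hr1 : r <= delta_c alpha) by apply Rmin_l.
  assert (hr2 : r <= sqrt 2 - alpha * (2 + eps_c alpha)) by apply Rmin_r.
  apply (interior_not_Bset alpha r); [lra|exact hr| |lra].
  destruct i; simpl in h1; [left|right]; lra.
Qed.

Lemma core_letter i j z : core i z -> core j z -> i = j.
Proof.
  destruct (alpha_constants alpha Halpha) as [_ [hd _]].
  intros [hi _] [hj _]. destruct i, j; simpl in *; auto; lra.
Qed.

End CoreStrip.

Lemma Fword_Rect alpha eta t w x :
  / 2 < alpha < / sqrt 2 -> 0 <= Rint eta 0 t <= delta_c alpha ->
  Rect (eps_c alpha) x -> Rect (eps_c alpha) (Fword alpha eta t w x).
Proof.
  intros Ha Hs Hx. induction w as [|i v IH]; simpl; auto.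
  exact (core_Rect alpha Ha i _ (Fmap_core alpha Ha eta t i _ Hs IH)).
Qed.

Lemma Fword_cons_core alpha eta t i v x :
  / 2 < alpha < / sqrt 2 -> 0 <= Rint eta 0 t <= delta_c alpha ->
  Bset alpha x -> core alpha i (Fword alpha eta t (i :: v) x).
Proof.
  intros Ha Hs Hx. apply (Fmap_core alpha Ha eta t i _ Hs).
  exact (Fword_Rect alpha eta t v x Ha Hs (Bset_Rect alpha x Hx)).
Qed.

Lemma Fword_disjoint alpha eta t :
  / 2 < alpha < / sqrt 2 -> 0 <= Rint eta 0 t <= delta_c alpha ->
  forall w w' x x', w <> w' -> Bset alpha x -> Bset alpha x' ->
  Fword alpha eta t w x <> Fword alpha eta t w' x'.
Proof.
  intros Ha Hs w. induction w as [|i v IH]; intros w' x x' hne hx hx' heq.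
  - destruct w' as [|j v']; [now apply hne|].
    apply (core_not_Bset alpha Ha j (Fword alpha eta t (j :: v') x'));
      [now apply Fword_cons_core | now rewrite <- heq].
  - assert (hi := Fword_cons_core alpha eta t i v x Ha Hs hx).
    destruct w' as [|j v'].
    + apply (core_not_Bset alpha Ha i _ hi). simpl in heq |- *. now rewrite heq.
    + assert (hj := Fword_cons_core alpha eta t j v' x' Ha Hs hx').
      rewrite heq in hi.
      destruct (core_letter alpha Ha i j _ hi hj).
      apply (IH v' x x'); auto.
      * intro e. apply hne. now subst.
      * destruct (alpha_constants alpha Ha) as [ha _].
        exact (Fmap_inj alpha eta t i _ _ ha heq).
Qed.

Theorem lemma2p8 (alpha : R) (eta : R -> R)
  (Halpha : / 2 < alpha < / sqrt 2)
  (Hsmooth : smooth eta)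
  (Hnonneg : forall x, 0 <= eta x)
  (Hsupp : supp_in_01 eta)
  (Hint : Rint eta 0 1 = delta_c alpha)
  (w w' : list letter) (Hww : w <> w') (t : R) :
  forall y, ~ (image (Fword alpha eta t w) (Bset alpha) y /\
               image (Fword alpha eta t w') (Bset alpha) y).
Proof.
  intros y [[x [hx ex]] [x' [hx' ex']]].
  assert (Hs := Rint_range eta _ Hsmooth Hnonneg Hsupp Hint t).
  apply (Fword_disjoint alpha eta t Halpha Hs w w' x x' Hww hx hx').
  congruence.
Qed.
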